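(* Let $I$ be the $2\times2$ identity, $e_1=\begin{pmatrix}1&0\\0&-1\end{pmatrix}$, $e_2=\begin{pmatrix}0&1\\1&0\end{pmatrix}$, $E=e_1e_2$, and let $V=\mathrm{span}_{\mathbb{R}}\{e_1,e_2\}$ with the Euclidean norm for which $\{e_1,e_2\}$ is orthonormal, i.e. $\|\gamma_1e_1+\gamma_2e_2\|=\sqrt{\gamma_1^2+\gamma_2^2}$. Let $A,B\in M_2(\mathbb{R})$ with $A=\alpha_0I+\alpha_{12}E+u$ and $B=\beta_0I+\beta_{12}E+v$, where $\alpha_0,\alpha_{12},\beta_0,\beta_{12}\in\mathbb{R}$ and $u,v\in V$. Then there exists $P\in O(2)$ with $PAP^{-1}=B$ if and only if $\alpha_0=\beta_0$, $\alpha_{12}=\pm\beta_{12}$ and $\|u\|=\|v\|$.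
   Context: $O(2)=\{P\in M_2(\mathbb{R}): PP^t=I\}$ is the real orthogonal group. *)

From HB Require Import structures.
From mathcomp Require Import all_boot all_order all_algebra.
From mathcomp Require Export reals.
Set Implicit Arguments. Unset Strict Implicit. Unset Printing Implicit Defensive.
Import Order.TTheory GRing.Theory Num.Theory.
Local Open Scope ring_scope.

Definition e1 {R : realType} : 'M[R]_2 :=
  \matrix_(i < 2, j < 2) (if i == j then (if i == 0 then 1 else -1) else 0).
Definition e2 {R : realType} : 'M[R]_2 :=
  \matrix_(i < 2, j < 2) (if i == j then 0 else 1).
Definition EE {R : realType} : 'M[R]_2 := e1 *m e2.

Definition vecV {R : realType} (g1 g2 : R) : 'M[R]_2 := g1 *: e1 + g2 *: e2.
Definition normV {R : realType} (g1 g2 : R) : R := Num.sqrt (g1 ^+ 2 + g2 ^+ 2).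

Definition orth2 {R : realType} (P : 'M[R]_2) : Prop := P *m P^T = 1%:M.

(* Write A = a0 + a E + g with g in V.  The traces of A, A^2 and A A^T are
   2 a0, 2 (a0^2 - a^2 + |g|^2) and 2 (a0^2 + a^2 + |g|^2); they are invariant
   under orthogonal conjugation, which gives the three conditions.
   Conversely, a unit vector w of V is a symmetric involution, hence lies in
   O(2), and conjugation by w fixes I, negates E (w anticommutes with E) and
   sends g to 2 <w, g> w - g, the reflection of g in the line of w.  Taking w on
   the bisector of g and d (or orthogonal to g when d = -g) maps a0 + a E + g to
   a0 - a E + d; composing two such reflections keeps the sign of a. *)

From HB Require Import structures.
From mathcomp Require Import all_boot all_order all_algebra.
From mathcomp Require Import reals.
From mathcomp Require Import ring lra.
Import Order.TTheory GRing.Theory Num.Theory.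
Set Implicit Arguments. Unset Strict Implicit. Unset Printing Implicit Defensive.
Local Open Scope ring_scope.

Section Matrix22.
Variable R : pzRingType.
Implicit Types a b c d k : R.

Definition mx22 a b c d : 'M[R]_2 :=
  \matrix_(i, j) if i == 0 then (if j == 0 then a else b)
                 else (if j == 0 then c else d).

Lemma mx22_entries (M : 'M[R]_2) : M = mx22 (M 0 0) (M 0 1) (M 1 0) (M 1 1).
Proof.
by apply/matrixP => -[[|[|//]] i] [[|[|//]] j]; rewrite !mxE /=;
  congr (M _ _); apply: val_inj.
Qed.

Lemma add_mx22 a b c d a1 b1 c1 d1 :
  mx22 a b c d + mx22 a1 b1 c1 d1 = mx22 (a + a1) (b + b1) (c + c1) (d + d1).
Proof. by rewrite [LHS]mx22_entries !mxE. Qed.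

Lemma scale_mx22 k a b c d :
  k *: mx22 a b c d = mx22 (k * a) (k * b) (k * c) (k * d).
Proof. by rewrite [LHS]mx22_entries !mxE. Qed.

Lemma scalar_mx22 k : k%:M = mx22 k 0 0 k.
Proof. by rewrite [LHS]mx22_entries !mxE. Qed.

Lemma trmx_mx22 a b c d : (mx22 a b c d)^T = mx22 a c b d.
Proof. by rewrite [LHS]mx22_entries !mxE. Qed.

Lemma mxtrace_mx22 a b c d : \tr (mx22 a b c d) = a + d.
Proof. by rewrite /mxtrace big_ord_recl big_ord1 !mxE. Qed.

Lemma mul_mx22 a b c d a1 b1 c1 d1 :
  mx22 a b c d *m mx22 a1 b1 c1 d1 =
  mx22 (a * a1 + b * c1) (a * b1 + b * d1) (c * a1 + d * c1) (c * b1 + d * d1).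
Proof. by rewrite [LHS]mx22_entries !mxE !big_ord_recl !big_ord0 !mxE !addr0. Qed.

End Matrix22.

Section OrthogonalConjugation.
Variables (R : comUnitRingType) (n : nat).
Implicit Types A B P Q : 'M[R]_n.

Lemma mxtrace_conj P A : P \in unitmx -> \tr (P *m A *m invmx P) = \tr A.
Proof. by move=> Pu; rewrite mxtrace_mulC mulmxA mulVmx ?mul1mx. Qed.

Lemma conj_mulmx P A B : P \in unitmx ->
  (P *m A *m invmx P) *m (P *m B *m invmx P) = P *m (A *m B) *m invmx P.
Proof. by move=> Pu; rewrite !mulmxA mulmxKV. Qed.

Lemma orthmx_unit P : P *m P^T = 1%:M -> P \in unitmx.
Proof. by case/mulmx1_unit. Qed.

Lemma orthmx_inv P : P *m P^T = 1%:M -> invmx P = P^T.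
Proof.
move=> PPt; rewrite -[invmx P]mulmx1 -PPt mulmxA mulVmx ?mul1mx //.
exact: orthmx_unit.
Qed.

Lemma orthmx_mul P Q : P *m P^T = 1%:M -> Q *m Q^T = 1%:M ->
  (P *m Q) *m (P *m Q)^T = 1%:M.
Proof. by move=> PPt QQt; rewrite trmx_mul mulmxA -(mulmxA P) QQt mulmx1. Qed.

Lemma orthmx_conj_trmx P A : P *m P^T = 1%:M ->
  (P *m A *m invmx P)^T = P *m A^T *m invmx P.
Proof. by move=> PPt; rewrite orthmx_inv // !trmx_mul trmxK mulmxA. Qed.

End OrthogonalConjugation.

Section CliffordMatrices.
Variable R : realType.

Definition cliff (a0 a g1 g2 : R) : 'M[R]_2 := a0%:M + a *: EE + vecV g1 g2.

Lemma e1_mx22 : e1 = mx22 1 0 0 (-1 : R).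
Proof. by rewrite [LHS]mx22_entries !mxE. Qed.

Lemma e2_mx22 : e2 = mx22 0 1 1 (0 : R).
Proof. by rewrite [LHS]mx22_entries !mxE. Qed.

Lemma vecV_mx22 (c s : R) : vecV c s = mx22 c s s (- c).
Proof.
by rewrite /vecV e1_mx22 e2_mx22 !scale_mx22 add_mx22; congr mx22; ring.
Qed.

Lemma cliff_mx22 (a0 a g1 g2 : R) :
  cliff a0 a g1 g2 = mx22 (a0 + g1) (a + g2) (g2 - a) (a0 - g1).
Proof.
rewrite /cliff /EE vecV_mx22 e1_mx22 e2_mx22 mul_mx22 scalar_mx22 scale_mx22.
by rewrite !add_mx22; congr mx22; ring.
Qed.

Lemma mxtrace_cliff (a0 a g1 g2 : R) :
  let A := cliff a0 a g1 g2 in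
  [/\ \tr A = a0 *+ 2,
      \tr (A *m A) = (a0 ^+ 2 - a ^+ 2 + g1 ^+ 2 + g2 ^+ 2) *+ 2
    & \tr (A *m A^T) = (a0 ^+ 2 + a ^+ 2 + g1 ^+ 2 + g2 ^+ 2) *+ 2].
Proof.
by rewrite /= cliff_mx22 trmx_mx22 !mul_mx22 !mxtrace_mx22; split; ring.
Qed.

Lemma vecV_tr (c s : R) : (vecV c s)^T = vecV c s.
Proof. by rewrite vecV_mx22 trmx_mx22. Qed.

Lemma vecV_orth (c s : R) : c ^+ 2 + s ^+ 2 = 1 -> orth2 (vecV c s).
Proof.
move=> cs1; rewrite /orth2 vecV_mx22 trmx_mx22 mul_mx22 scalar_mx22.
by congr mx22; lra.
Qed.

Lemma vecV_conj_cliff (c s a0 a g1 g2 : R) :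
  vecV c s *m cliff a0 a g1 g2 *m vecV c s =
  cliff ((c ^+ 2 + s ^+ 2) * a0) (- ((c ^+ 2 + s ^+ 2) * a))
    (2 * (c * g1 + s * g2) * c - (c ^+ 2 + s ^+ 2) * g1)
    (2 * (c * g1 + s * g2) * s - (c ^+ 2 + s ^+ 2) * g2).
Proof. by rewrite !cliff_mx22 vecV_mx22 !mul_mx22; congr mx22; ring. Qed.

End CliffordMatrices.

Section Mirrors.
Variable R : rcfType.

Lemma sqr_add_eq0 (x y : R) : x ^+ 2 + y ^+ 2 = 0 -> x = 0 /\ y = 0.
Proof.
by move/eqP; rewrite paddr_eq0 ?sqr_ge0 // !sqrf_eq0 => /andP[/eqP -> /eqP ->].
Qed.

Lemma normalizer_exists (x y : R) : x ^+ 2 + y ^+ 2 != 0 ->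
  exists k, k ^+ 2 * (x ^+ 2 + y ^+ 2) = 1.
Proof.
move=> q0; exists (Num.sqrt (x ^+ 2 + y ^+ 2))^-1.
by rewrite exprVn sqr_sqrtr ?mulVf // addr_ge0 ?sqr_ge0.
Qed.

Lemma unit_orthogonal_exists (g1 g2 : R) :
  exists c s, c ^+ 2 + s ^+ 2 = 1 /\ c * g1 + s * g2 = 0.
Proof.
have [g0|g0] := eqVneq (g2 ^+ 2 + g1 ^+ 2) 0.
  by have [-> ->] := sqr_add_eq0 g0; exists 0, 1; split; ring.
have [k k1] := normalizer_exists g0.
by exists (- k * g2), (k * g1); split; [rewrite -k1 | ]; ring.
Qed.

Lemma mirror_exists (g1 g2 d1 d2 : R) :
  g1 ^+ 2 + g2 ^+ 2 = d1 ^+ 2 + d2 ^+ 2 ->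
  exists c s, [/\ c ^+ 2 + s ^+ 2 = 1,
    2 * (c * g1 + s * g2) * c - g1 = d1 & 2 * (c * g1 + s * g2) * s - g2 = d2].
Proof.
move=> gd; set u1 := d1 + g1; set u2 := d2 + g2.
have [u0|u0] := eqVneq (u1 ^+ 2 + u2 ^+ 2) 0.
  have [/eqP + /eqP] := sqr_add_eq0 u0; rewrite !addr_eq0 => /eqP-> /eqP->.
  have [c [s [cs1 cs_g]]] := unit_orthogonal_exists g1 g2.
  by exists c, s; split=> //; rewrite cs_g; ring.
have [k k1] := normalizer_exists u0.
have uu : u1 ^+ 2 + u2 ^+ 2 = 2 * (u1 * g1 + u2 * g2) by rewrite /u1 /u2; lra.
have proj u : 2 * (k * u1 * g1 + k * u2 * g2) * (k * u) =
              u * (k ^+ 2 * (u1 ^+ 2 + u2 ^+ 2)) by rewrite uu; ring.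
exists (k * u1), (k * u2); split; first by rewrite -k1; ring.
  by rewrite proj k1 mulr1 addrK.
by rewrite proj k1 mulr1 addrK.
Qed.

End Mirrors.

Section OrthogonalSimilarity.
Variable R : realType.

Definition orth_similar (A B : 'M[R]_2) :=
  exists P, orth2 P /\ P *m A *m invmx P = B.

Lemma orth_similar_trans (A B C : 'M[R]_2) :
  orth_similar A B -> orth_similar B C -> orth_similar A C.
Proof.
move=> [P [oP <-]] [Q [oQ <-]]; exists (Q *m P); split; first exact: orthmx_mul.
by rewrite !orthmx_inv ?orthmx_mul // trmx_mul !mulmxA.
Qed.

Lemma orth_similar_cliff_invariants (a0 a g1 g2 b0 b d1 d2 : R) :
  orth_similar (cliff a0 a g1 g2) (cliff b0 b d1 d2) ->
  [/\ a0 = b0, a ^+ 2 = b ^+ 2 & g1 ^+ 2 + g2 ^+ 2 = d1 ^+ 2 + d2 ^+ 2].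
Proof.
move=> [P [oP AB]]; have Pu := orthmx_unit oP.
have [trA trAA trAAt] := mxtrace_cliff a0 a g1 g2.
have [trB trBB trBBt] := mxtrace_cliff b0 b d1 d2.
move: trB trBB trBBt; rewrite -AB conj_mulmx // orthmx_conj_trmx // conj_mulmx //.
rewrite !mxtrace_conj // trA trAA trAAt => tr1 tr2 tr3.
have a0b0 : a0 = b0 by lra.
by subst b0; split=> //; lra.
Qed.

Lemma orth_similar_cliff_mirror (a0 a g1 g2 d1 d2 : R) :
  g1 ^+ 2 + g2 ^+ 2 = d1 ^+ 2 + d2 ^+ 2 ->
  orth_similar (cliff a0 a g1 g2) (cliff a0 (- a) d1 d2).
Proof.
move=> gd; have [c [s [cs1 <- <-]]] := mirror_exists gd.
have ow := vecV_orth cs1.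
exists (vecV c s); split=> //.
by rewrite orthmx_inv // vecV_tr vecV_conj_cliff cs1 !mul1r.
Qed.

End OrthogonalSimilarity.

Lemma normV_eq (R : realType) (g1 g2 d1 d2 : R) :
  normV g1 g2 = normV d1 d2 <-> g1 ^+ 2 + g2 ^+ 2 = d1 ^+ 2 + d2 ^+ 2.
Proof.
rewrite /normV; split=> [/eqP|-> //].
by rewrite eqr_sqrt ?addr_ge0 ?sqr_ge0 // => /eqP.
Qed.

Theorem mainTheorem9 (R : realType) (A B : 'M[R]_2)
  (a0 a12 b0 b12 g1 g2 d1 d2 : R) :
  A = a0%:M + a12 *: EE + vecV g1 g2 ->
  B = b0%:M + b12 *: EE + vecV d1 d2 ->
  (exists P : 'M[R]_2, orth2 P /\ P *m A *m invmx P = B) <->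
  [/\ a0 = b0, (a12 = b12 \/ a12 = - b12) & normV g1 g2 = normV d1 d2].
Proof.
move=> -> ->; split.
  case/orth_similar_cliff_invariants=> -> /eqP.
  rewrite eqf_sqr => /orP ab /normV_eq gd.
  by split=> //; case: ab => /eqP; [left | right].
case=> <- ab /normV_eq gd; rewrite -[b12]opprK.
case: ab => ->; last exact: orth_similar_cliff_mirror.
apply: (@orth_similar_trans _ _ (cliff a0 (- b12) g1 g2)).
  exact: orth_similar_cliff_mirror.
exact: orth_similar_cliff_mirror.
Qed.
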